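(* Let $S=\{\rho_1=0<\rho_2<\cdots\}$ be a numerical semigroup. For a positive integer $d$ let $R_d=\{i\ge 1:\ \#A[\rho_i]<d\}$. Then the following are equivalent: (a) $S$ is an Arf semigroup; (b) for every positive integer $d$, $\#R_d=\rho_{\lceil d/2\rceil}+\lfloor d/2\rfloor$.
   Context: A numerical semigroup is a submonoid $S$ of $(\mathbb{N}_0,+)$ with finite complement, with elements listed increasingly $\rho_1=0<\rho_2<\cdots$. $S$ is an Arf semigroup if for all positive integers $i\ge j\ge k$ one has $\rho_i+\rho_j-\rho_k\in S$. For $\rho\in S$, $A[\rho]=\{p\in S:\ \rho-p\in S\}$. *)

From Stdlib Require Import ClassicalEpsilon.
From mathcomp Require Import all_boot.
Set Implicit Arguments. Unset Strict Implicit. Unset Printing Implicit Defensive.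

Definition numerical_semigroup (S : pred nat) : Prop :=
  S 0 /\ (forall a b, S a -> S b -> S (a + b)) /\
  exists N, forall n, N <= n -> S n.

(* rho S i (for i >= 1) is the i-th element of S in increasing order:
   the element x of S having exactly i-1 elements of S below it. *)
Definition rho (S : pred nat) (i : nat) : nat :=
  epsilon (inhabits 0) (fun x => S x /\ count S (iota 0 x) = i.-1).

(* #A[r] where A[r] = {p in S : r - p in S}; all such p lie in [0, r]. *)
Definition cardA (S : pred nat) (r : nat) : nat :=
  count (fun p => S p && S (r - p)) (iota 0 r.+1).

Definition has_card (P : nat -> Prop) (n : nat) : Prop :=
  exists s : seq nat, uniq s /\ (forall i, i \in s <-> P i) /\ size s = n.

Definition Rset (S : pred nat) (d : nat) : nat -> Prop :=
  fun i => 1 <= i /\ cardA S (rho S i) < d.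

Definition Arf (S : pred nat) : Prop :=
  forall i j k, 1 <= k -> k <= j -> j <= i ->
    S (rho S i + rho S j - rho S k).

From Stdlib Require Import ClassicalEpsilon.
From mathcomp Require Import all_boot zify.
Set Implicit Arguments. Unset Strict Implicit. Unset Printing Implicit Defensive.

(* Fix x in S with k elements of S below it, so that x = rho_(k+1), and let x + S_x, where
   S_x = {s in S : s >= x}, be the translate [in_shift S x].  Splitting A[r] at r/2 shows that
   if the Arf condition holds at every p <= x, then for r in S one has #A[r] <= 2k iff r is not
   in x + S_x, and #A[r] <= 2k+1 iff moreover r <> 2x.  As S \ (x + S_x) has x + k elements,
   this gives #R_(2k+1) = x + k and #R_(2k+2) = x + k + 1.
   Conversely, the bound #A[y+z] >= 2k+1 for x <= y <= z in S needs the Arf condition only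
   below x.  So if #R_(2k+1) = x + k, the inclusion of {r in S : #A[r] <= 2k} in S \ (x + S_x)
   is an equality, which puts y + z in x + S_x, i.e. y + z - x in S; strong induction on x
   then yields the Arf property. *)

Section CountLemmas.

Variable T : eqType.
Implicit Types (a b : pred T) (s : seq T).

Lemma count_predIC a b s :
  count (predI a b) s + count (predI a (predC b)) s = count a s.
Proof. by elim: s => //= y s <-; case: (a y); case: (b y) => /=; lia. Qed.

Lemma sub_count_ltn a b s x :
  subpred a b -> x \in s -> b x -> ~~ a x -> count a s < count b s.
Proof.
move=> sub_ab; elim: s => //= y s IH; rewrite inE => /orP[/eqP<- bx /negbTE ax|xs bx ax].
  by rewrite bx ax add0n add1n ltnS sub_count.
have ab_y : a y <= b y by case ay: (a y); rewrite // (sub_ab _ ay).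
by have := IH xs bx ax; lia.
Qed.

Lemma sub_count_eq a b s : subpred a b -> count a s = count b s ->
  {in s, subpred b a}.
Proof.
move=> sub_ab eq_ab x xs bx; apply/negPn/negP => ax.
by have := sub_count_ltn sub_ab xs bx ax; rewrite eq_ab ltnn.
Qed.

Lemma has_predD_count a b s : count b s < count a s -> has (predD a b) s.
Proof.
rewrite has_count.
have ab_le_b : count (predI a b) s <= count b s by apply: sub_count => y /andP[].
have -> : count (predD a b) s = count (predI a (predC b)) s.
  by apply: eq_count => y; rewrite /= andbC.
by rewrite -(count_predIC a b); lia.
Qed.

End CountLemmas.

Lemma has_card_unique (P : nat -> Prop) n m : has_card P n -> has_card P m -> n = m.
Proof.
case=> [s [uniq_s [mem_s <-]]] [t [uniq_t [mem_t <-]]].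
apply/perm_size/uniq_perm => // i.
by apply/idP/idP => [/(mem_s i)/(mem_t i) | /(mem_t i)/(mem_s i)].
Qed.

Lemma count_iota_all (P : pred nat) m n :
  (forall i, m <= i < m + n -> P i) -> count P (iota m n) = n.
Proof.
move=> allP; rewrite (eq_in_count (a2 := predT)) ?count_predT ?size_iota //.
by move=> i; rewrite mem_iota => /allP.
Qed.

Lemma perm_iota_reflect r : perm_eq [seq r - p | p <- iota 0 r.+1] (iota 0 r.+1).
Proof.
apply: uniq_perm; last 2 first.
- exact: iota_uniq.
- move=> i; apply/mapP/idP => [[p _ ->]|]; first by rewrite mem_iota; lia.
  by rewrite mem_iota => i_le_r; exists (r - i); rewrite ?mem_iota; lia.
rewrite map_inj_in_uniq ?iota_uniq // => p q; rewrite !mem_iota; lia.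
Qed.

Definition card_below (S : pred nat) (x : nat) := count S (iota 0 x).

Definition arf_at (S : pred nat) (x : nat) :=
  forall y z, S y -> S z -> x <= y -> y <= z -> S (y + z - x).

Definition in_shift (S : pred nat) (x r : nat) := (x + x <= r) && S (r - x).

Definition pairs_le (S : pred nat) (r : nat) :=
  count (fun p => S p && S (r - p) && (p + p <= r)) (iota 0 r.+1).

Definition pairs_lt (S : pred nat) (r : nat) :=
  count (fun p => S p && S (r - p) && (p + p < r)) (iota 0 r.+1).

Section NumericalSemigroup.

Variables (S : pred nat) (N : nat).
Hypothesis S_add : forall a b, S a -> S b -> S (a + b).
Hypothesis S_ge : forall n, N <= n -> S n.

Lemma card_belowS x : card_below S x.+1 = card_below S x + S x.
Proof. by rewrite /card_below -addn1 iotaD count_cat /= addn0. Qed.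

Lemma card_belowD x m : card_below S (x + m) = card_below S x + count S (iota x m).
Proof. by rewrite /card_below iotaD count_cat. Qed.

Lemma leq_card_below x y : x <= y -> card_below S x <= card_below S y.
Proof. by move=> le_xy; rewrite -(subnKC le_xy) card_belowD leq_addr. Qed.

Lemma card_below_ltn x y : S x -> x < y -> card_below S x < card_below S y.
Proof. by move=> Sx /leq_card_below; rewrite card_belowS Sx addn1. Qed.

Lemma card_below_inj x y : S x -> S y -> card_below S x = card_below S y -> x = y.
Proof.
move=> Sx Sy eq_xy; case: (ltngtP x y) => // [/(card_below_ltn Sx)|/(card_below_ltn Sy)];
  by rewrite eq_xy ltnn.
Qed.

Lemma count_below_iota t n : t <= n ->
  count (fun p => S p && (p < t)) (iota 0 n) = card_below S t.
Proof.
move=> le_tn; rewrite -(subnKC le_tn) iotaD count_cat /card_below.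
rewrite (@eq_in_count _ _ S (iota 0 t)); last first.
  by move=> p; rewrite mem_iota => /andP[_ ->]; rewrite andbT.
rewrite (@eq_in_count _ _ pred0 (iota t _)) ?count_pred0 ?addn0 // => p.
by rewrite mem_iota => /andP[le_tp _] /=; rewrite ltnNge le_tp andbF.
Qed.

Lemma count_below_iota_le t n :
  count (fun p => S p && (p < t)) (iota 0 n) <= card_below S t.
Proof. by rewrite -(count_below_iota (leq_addl n t)) iotaD count_cat leq_addr. Qed.

Lemma card_below_conductor m k : N <= m -> card_below S (m + k) = card_below S m + k.
Proof.
move=> le_Nm; rewrite card_belowD (count_iota_all (m := m)) // => i /andP[le_mi _].
by apply: S_ge; lia.
Qed.

Lemma card_below_onto i : exists x, S x /\ card_below S x = i.
Proof.
(* The least x with i < card_below S x.+1 works, as card_below grows by steps of at most 1. *)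
have ex_x : exists x, i < card_below S x.+1.
  by exists (N + i); rewrite -addnS card_below_conductor //; lia.
have [x lt_i_x min_x] := ex_minnP ex_x.
have le_x_i : card_below S x <= i.
  case: x lt_i_x min_x => [|x] _ min_x; first by [].
  by rewrite leqNgt; apply/negP => /min_x; lia.
by move: lt_i_x; rewrite card_belowS; case Sx: (S x) => /= lt_i_x; [exists x | ]; lia.
Qed.

Lemma rho_spec i : S (rho S i) /\ card_below S (rho S i) = i.-1.
Proof. exact: (epsilon_spec (inhabits 0) _ (card_below_onto i.-1)). Qed.

Lemma S_rho i : S (rho S i).
Proof. exact: (rho_spec i).1. Qed.

Lemma card_below_rho i : card_below S (rho S i) = i.-1.
Proof. exact: (rho_spec i).2. Qed.

Lemma rho_card_below x : S x -> rho S (card_below S x).+1 = x.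
Proof. by move=> Sx; apply: card_below_inj (S_rho _) Sx _; rewrite card_below_rho. Qed.

Lemma leq_rho i j : i <= j -> rho S i <= rho S j.
Proof.
move=> le_ij; rewrite leqNgt; apply/negP => /(card_below_ltn (S_rho j)).
by rewrite !card_below_rho; lia.
Qed.

Lemma Arf_arf_at : Arf S <-> forall x, S x -> arf_at S x.
Proof.
split=> [arfS x Sx y z Sy Sz le_xy le_yz | arfS i j k _ le_kj le_ji].
  have := arfS (card_below S z).+1 (card_below S y).+1 (card_below S x).+1 isT.
  by rewrite !rho_card_below // addnC !ltnS; apply; apply: leq_card_below.
by rewrite addnC; apply: arfS; rewrite ?S_rho ?leq_rho.
Qed.

Lemma cardA_pairs r : cardA S r = pairs_le S r + pairs_lt S r.
Proof.
rewrite /cardA -(count_predIC _ (fun p => p + p <= r)); congr (_ + _).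
rewrite /pairs_lt -(permP (perm_iota_reflect r)) count_map.
apply: eq_in_count => p; rewrite mem_iota /= => le_pr.
by rewrite subKn // [S (r - p) && _]andbC -ltnNge; congr (_ && _); apply/idP/idP; lia.
Qed.

Lemma pairs_lt_le r : pairs_lt S r <= pairs_le S r.
Proof. by apply: sub_count => p /andP[-> /ltnW]. Qed.

Lemma cardA_sum_ge x y z : S x -> (forall p, S p -> p < x -> arf_at S p) ->
  S y -> S z -> x <= y -> y <= z -> (card_below S x).*2 < cardA S (y + z).
Proof.
move=> Sx arf_lt Sy Sz le_xy le_yz.
have below_x : count (fun p => S p && (p < x)) (iota 0 (y + z).+1) = card_below S x.
  by apply: count_below_iota; lia.
have lt_part : card_below S x <= pairs_lt S (y + z).
  rewrite -below_x; apply: sub_count => p /andP[Sp lt_px].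
  by rewrite Sp arf_lt //=; lia.
have le_part : card_below S x < pairs_le S (y + z).
  rewrite -below_x; apply: (sub_count_ltn (x := y)).
  - by move=> p /andP[Sp lt_px]; rewrite Sp arf_lt //=; lia.
  - by rewrite mem_iota; lia.
  - by rewrite /= Sy addKn Sz leq_add2l.
  - by rewrite ltnNge le_xy andbF.
by rewrite cardA_pairs -addnn; lia.
Qed.

Lemma in_shift_of_cardA x r : S x -> arf_at S x ->
  (card_below S x).*2 < cardA S r -> in_shift S x r.
Proof.
move=> Sx arf_x; rewrite cardA_pairs -addnn => big.
have : count (fun p => S p && (p < x)) (iota 0 r.+1) < pairs_le S r.
  by have := count_below_iota_le x r.+1; have := pairs_lt_le r; lia.
case/has_predD_count/hasP => a _ /andP[/= small /andP[/andP[Sa Sra] le_2a]].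
have le_xa : x <= a by move: small; rewrite Sa /= -leqNgt.
apply/andP; split; first lia.
by rewrite (_ : r - x = a + (r - a) - x); [apply: arf_x => //; lia | lia].
Qed.

Lemma cardA_double_le x : S x -> cardA S (x + x) <= (card_below S x).*2.+1.
Proof.
move=> Sx; rewrite cardA_pairs.
have lt_part : pairs_lt S (x + x) <= card_below S x.
  apply: leq_trans (count_below_iota_le x (x + x).+1).
  by apply: sub_count => p /andP[/andP[-> _] ?] /=; lia.
have le_part : pairs_le S (x + x) <= card_below S x.+1.
  apply: leq_trans (count_below_iota_le x.+1 (x + x).+1).
  by apply: sub_count => p /andP[/andP[-> _] ?] /=; lia.
by move: le_part; rewrite card_belowS Sx -addnn; lia.
Qed.

Lemma cardA_shift_ge x r : S x -> (forall p, S p -> p <= x -> arf_at S p) ->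
  x + x < r -> S (r - x) -> (card_below S x).*2.+1 < cardA S r.
Proof.
move=> Sx arf_le lt_2x_r Srx.
have lt_part : card_below S x.+1 <= pairs_lt S r.
  rewrite -(count_below_iota (_ : x.+1 <= r.+1)); last lia.
  apply: sub_count => p /andP[Sp le_px].
  by rewrite Sp (_ : r - p = x + (r - x) - p) ?arf_le //=; lia.
by move: lt_part; rewrite cardA_pairs card_belowS Sx -addnn; have := pairs_lt_le r; lia.
Qed.

Lemma cardA_lt_bound r d : cardA S r < d -> r < N + N + d.
Proof.
rewrite ltnNge [r < _]ltnNge; apply: contra => le_r; rewrite /cardA.
have -> : r.+1 = N + ((r.+1 - N - N) + N) by lia.
rewrite iotaD iotaD !count_cat add0n (count_iota_all (m := N)); first lia.
by move=> i i_mid; apply/andP; split; apply: S_ge; lia.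
Qed.

Lemma cardA_in_shift_ge x r : S x -> (forall p, S p -> p < x -> arf_at S p) ->
  in_shift S x r -> (card_below S x).*2 < cardA S r.
Proof.
move=> Sx arf_lt /andP[le_2x_r Srx].
have := cardA_sum_ge Sx arf_lt Sx Srx (leqnn x) (_ : x <= r - x).
by rewrite subnKC; lia.
Qed.

Lemma cardA_lt_odd x r : S x -> (forall p, S p -> p <= x -> arf_at S p) -> S r ->
  (cardA S r < (card_below S x).*2.+1) = ~~ in_shift S x r.
Proof.
move=> Sx arf_le Sr; have arf_lt p Sp (lt_px : p < x) := arf_le p Sp (ltnW lt_px).
apply/idP/idP => [small | not_shift].
  by apply/negP => /(cardA_in_shift_ge Sx arf_lt); lia.
by rewrite ltnS leqNgt; apply: contra not_shift; apply: in_shift_of_cardA Sx (arf_le x Sx _).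
Qed.

Lemma cardA_lt_even x r : S x -> (forall p, S p -> p <= x -> arf_at S p) -> S r ->
  (cardA S r < (card_below S x).*2.+2) = ~~ in_shift S x r || (r == x + x).
Proof.
move=> Sx arf_le Sr; case: (eqVneq r (x + x)) => [->|ne_r].
  by rewrite orbT ltnS cardA_double_le.
rewrite orbF; apply/idP/idP => [small | not_shift].
  apply/negP => /andP[le_2x_r Srx].
  by have := cardA_shift_ge Sx arf_le (_ : x + x < r) Srx; lia.
by rewrite -cardA_lt_odd // in not_shift; lia.
Qed.

Lemma has_card_rho (X : pred nat) M : (forall r, S r -> X r -> r < M) ->
  has_card (fun i => 1 <= i /\ X (rho S i)) (count (predI S X) (iota 0 M)).
Proof.
move=> X_lt_M; exists [seq (card_below S r).+1 | r <- iota 0 M & predI S X r].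
split; [|split].
- rewrite map_inj_in_uniq ?filter_uniq ?iota_uniq // => r t.
  rewrite !mem_filter => /andP[/andP[Sr _] _] /andP[/andP[St _] _] [].
  exact: card_below_inj.
- move=> i; split.
    case/mapP => r; rewrite mem_filter => /andP[/andP[Sr Xr] _] ->.
    by rewrite rho_card_below.
  case=> i_gt0 Xi; apply/mapP; exists (rho S i).
    by rewrite mem_filter /= S_rho Xi mem_iota X_lt_M ?S_rho.
  by rewrite card_below_rho prednK.
- by rewrite size_map size_filter.
Qed.

Lemma has_card_Rset d M : N + N + d <= M ->
  has_card (Rset S d) (count (fun r => S r && (cardA S r < d)) (iota 0 M)).
Proof.
move=> le_M; apply: has_card_rho => r _ /cardA_lt_bound lt_r.
exact: leq_trans lt_r le_M.
Qed.

Lemma count_in_shift x k : S x -> x <= k ->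
  count (fun r => S r && in_shift S x r) (iota 0 (x + k)) = card_below S k - card_below S x.
Proof.
move=> Sx le_xk; rewrite iotaD count_cat.
rewrite (@eq_in_count _ _ pred0 (iota 0 x)) ?count_pred0 ?add0n; last first.
  move=> p; rewrite mem_iota /in_shift /= => lt_px.
  by rewrite [x + x <= p]leqNgt ltn_addl ?andbF; lia.
rewrite -[x in iota x _]addn0 iotaDl count_map.
rewrite (@eq_count _ _ (predI S (predC (fun t => t < x)))); last first.
  move=> t; rewrite /= /in_shift leq_add2l addKn -leqNgt.
  by case St: (S t); rewrite ?andbF // S_add // andbT.
rewrite -(count_below_iota le_xk) /card_below.
by rewrite -(count_predIC S (fun t => t < x) (iota 0 k)) addKn.
Qed.

Lemma count_notin_shift x M : S x -> x + x + N <= M ->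
  count (fun r => S r && ~~ in_shift S x r) (iota 0 M) = x + card_below S x.
Proof.
move=> Sx le_M; have le_xM : x <= M - x by lia.
have shifted := count_in_shift Sx le_xM; rewrite subnKC in shifted; last lia.
have full : card_below S M = card_below S (M - x) + x.
  by rewrite -card_below_conductor ?subnK //; lia.
have split := count_predIC S (in_shift S x) (iota 0 M).
rewrite -/(card_below S M) full shifted in split.
apply: (@addnI (card_below S (M - x) - card_below S x)); rewrite split.
by have := leq_card_below le_xM; lia.
Qed.

Lemma has_card_Rset_odd x : S x -> (forall p, S p -> p <= x -> arf_at S p) ->
  has_card (Rset S (card_below S x).*2.+1) (x + card_below S x).
Proof.
move=> Sx arf_le; set K := card_below S x.
have /has_card_Rset : N + N + K.*2.+1 <= x + x + N + N + K.*2.+1 by lia.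
rewrite (@eq_in_count _ _ (fun r => S r && ~~ in_shift S x r)) ?count_notin_shift //; first lia.
by move=> r _; case Sr: (S r); rewrite //= cardA_lt_odd.
Qed.

Lemma has_card_Rset_even x : S x -> (forall p, S p -> p <= x -> arf_at S p) ->
  has_card (Rset S (card_below S x).*2.+2) (x + (card_below S x).+1).
Proof.
move=> Sx arf_le; set K := card_below S x; set M := x + x + N + N + K.*2.+2.
have S_2x : S (x + x) by apply: S_add.
have shift_2x : in_shift S x (x + x) by rewrite /in_shift leqnn addnK Sx.
have /has_card_Rset : N + N + K.*2.+2 <= M by lia.
rewrite (@eq_in_count _ _ (predU (fun r => S r && ~~ in_shift S x r) (pred1 (x + x)))); last first.
  move=> r _; case Sr: (S r); first by rewrite /= Sr cardA_lt_even.
  by rewrite /= Sr; case: (eqVneq r (x + x)) Sr => // ->; rewrite S_2x.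
have := count_predUI (fun r => S r && ~~ in_shift S x r) (pred1 (x + x)) (iota 0 M).
rewrite (@eq_count _ (predI _ _) pred0) => [|r]; last first.
  by rewrite /= andbC; case: (eqVneq r (x + x)) => [->|] //; rewrite shift_2x andbF.
have lt_2x_M : x + x < M by rewrite /M; lia.
rewrite count_pred0 addn0 count_notin_shift ?count_uniq_mem ?iota_uniq ?mem_iota ?lt_2x_M //.
  by move=> ->; rewrite addn1 addnS.
by rewrite /M; lia.
Qed.

Lemma arf_at_of_has_card_Rset x : S x -> (forall p, S p -> p < x -> arf_at S p) ->
  has_card (Rset S (card_below S x).*2.+1) (x + card_below S x) -> arf_at S x.
Proof.
move=> Sx arf_lt card_R; set K := card_below S x; set M := x + x + N + N + K.*2.+1.
have same_count : count (fun r => S r && (cardA S r < K.*2.+1)) (iota 0 M) =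
                  count (fun r => S r && ~~ in_shift S x r) (iota 0 M).
  rewrite count_notin_shift //; last lia.
  by apply: has_card_unique card_R; apply: has_card_Rset; lia.
have small_notin_shift : subpred (fun r => S r && (cardA S r < K.*2.+1))
                                   (fun r => S r && ~~ in_shift S x r).
  move=> r /andP[Sr small]; rewrite Sr /=.
  by apply/negP => /(cardA_in_shift_ge Sx arf_lt); lia.
have notin_shift_small := sub_count_eq small_notin_shift same_count.
move=> y z Sy Sz le_xy le_yz; have big := cardA_sum_ge Sx arf_lt Sy Sz le_xy le_yz.
case: (ltnP (y + z) M) => [lt_M | ge_M]; last by apply: S_ge; rewrite /M in ge_M; lia.
suff /andP[_ //] : in_shift S x (y + z).
apply/negPn/negP => not_shift.
have /andP[_] : S (y + z) && (cardA S (y + z) < K.*2.+1).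
  by apply: notin_shift_small; rewrite ?mem_iota ?S_add.
lia.
Qed.

End NumericalSemigroup.

Theorem mainTheorem2 (S : pred nat) (hS : numerical_semigroup S) :
  Arf S <->
  (forall d, 0 < d -> has_card (Rset S d) (rho S (uphalf d) + d./2)).
Proof.
have [_ [S_add [N S_ge]]] := hS.
rewrite (Arf_arf_at S_ge); split=> [arfS d d_gt0 | card_R].
  set x := rho S (uphalf d); have Sx : S x := S_rho S_ge _.
  have arf_le p (Sp : S p) (_ : p <= x) := arfS p Sp.
  have K_x : card_below S x = (uphalf d).-1 := card_below_rho S_ge _.
  have [[-> ->] | [-> ->]] : d./2 = card_below S x /\ d = (card_below S x).*2.+1 \/
                             d./2 = (card_below S x).+1 /\ d = (card_below S x).*2.+2.
    by move: K_x (uphalf_half d) (odd_double_half d) d_gt0; case: (odd d) => /=; lia.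
  - exact: (has_card_Rset_odd S_add S_ge Sx arf_le).
  - exact: (has_card_Rset_even S_add S_ge Sx arf_le).
move=> x; elim/ltn_ind: x => x IH Sx.
apply: (arf_at_of_has_card_Rset S_add S_ge Sx) => [p Sp lt_px | ]; first exact: IH.
have := card_R (card_below S x).*2.+1 isT.
by rewrite /= doubleK uphalf_double (rho_card_below S_ge Sx).
Qed.
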